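(* For every integer $\ell$ with $\mu_q(n)\le\ell<n$, one has $|\Omega_\ell|<n^{\ell/\mu_q(n)}$.
   Context: Let $q$ be a prime power, $\mathbb{F}=\mathbb{F}_{q^2}$, $G$ a finite abelian group of odd order $n$ with $\gcd(n,q)=1$, and $\mathbb{F}G$ its group algebra. Let $\tau:\mathbb{F}G\to\mathbb{F}G$, $\sum_g\alpha_g g\mapsto\sum_g\alpha_g^q g^{-1}$. Let $e_0=\frac1n\sum_g g$. The primitive idempotents are $e_0$; $e_1,\dots,e_r$ ($\neq e_0$, fixed by $\tau$); and $e_{r+1},\tau(e_{r+1}),\dots,e_{r+s},\tau(e_{r+s})$ (not fixed by $\tau$). Put $\widehat{e}_{r+j}=e_{r+j}+\tau(e_{r+j})$ and $\widehat{E}^\dagger=\{e_1,\dots,e_r,\widehat{e}_{r+1},\dots,\widehat{e}_{r+s}\}$. Let $\mu_q(n)=\min\{\dim_{\mathbb{F}}\mathbb{F}Ge: e\text{ primitive idempotent},\ e\neq e_0\}$. For an integer $\ell$, $\Omega_\ell$ is the set of subspaces $J=\bigoplus_{e\in S}\mathbb{F}Ge$ of $\mathbb{F}G$ with $S\subseteq\widehat{E}^\dagger$ and $\dim_{\mathbb{F}}J=\ell$. *)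

From HB Require Import structures.
From mathcomp Require Import all_boot all_algebra all_fingroup all_field.

Set Implicit Arguments.
Unset Strict Implicit.
Unset Printing Implicit Defensive.

Import GRing.Theory.
Local Open Scope ring_scope.

(* The group algebra FG of a finite group (the whole finGroupType gT) over a
   field F: elements sum_g a_g g are represented by their coefficient
   functions g |-> a_g.  F^o makes this an F-vector space (vectType F). *)
Definition galg (F : finFieldType) (gT : finGroupType) := {ffun gT -> F^o}.

Section GroupAlgebra.
Variables (F : finFieldType) (gT : finGroupType).
Local Notation FG := (galg F gT).

Definition gmul (a b : FG) : FG :=
  [ffun g => \sum_(h : gT) a h * b (h^-1 * g)%g].

Definition gtau (q : nat) (a : FG) : FG := [ffun g => a (g^-1)%g ^+ q].

Definition ge0 : FG := [ffun => (#|gT|%:R)^-1].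

Definition gidem (e : FG) := (e != 0) && (gmul e e == e).

Definition gprim (e : FG) :=
  gidem e && [forall f1 : FG, forall f2 : FG,
     ~~ [&& gidem f1, gidem f2, gmul f1 f2 == 0, gmul f2 f1 == 0 &
            e == f1 + f2]].

Definition gideal (e : FG) : {vspace FG} :=
  <<[seq gmul x e | x <- enum {: FG}]>>%VS.

Definition Ehat (q : nat) : {set FG} :=
  [set e | [&& gprim e, e != ge0 & gtau q e == e]] :|:
  ((fun e : FG => e + gtau q e) @: [set e : FG | gprim e & gtau q e != e]).

Definition mu_q : nat :=
  \big[minn/#|gT|]_(e : FG | gprim e && (e != ge0)) \dim (gideal e).

Definition Jsum (S : {set FG}) : {vspace FG} := (\sum_(e in S) gideal e)%VS.

(* Omega_l, each subspace J represented by its set of elements *)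
Definition Omega (q l : nat) : {set {set FG}} :=
  [set [set x | x \in Jsum S] |
     S in [set S : {set FG} | (S \subset Ehat q) && (\dim (Jsum S) == l)]].

End GroupAlgebra.

From HB Require Import structures.
From mathcomp Require Import all_boot all_order all_algebra all_fingroup all_field.

Set Implicit Arguments.
Unset Strict Implicit.
Unset Printing Implicit Defensive.

Import GRing.Theory.

(* The elements of Ehat are pairwise orthogonal idempotents, orthogonal to e0,
   and each of them absorbs a primitive idempotent e <> e0, so that FGx has
   dimension at least mu for x in Ehat.  Hence J_S is the direct sum of the FGx,
   x in S, and dim J_S >= #|S| mu: a member of Omega_l is J_S for a nonempty
   S of Ehat with #|S| <= l / mu.  As e0 and Ehat together give #|Ehat| < n,
   there are fewer than n ^ (l / mu) such S; raise to the power mu. *)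

Lemma bin_leq_expn N k : 'C(N, k) <= N ^ k.
Proof.
apply: (@leq_trans (N ^_ k)); first by rewrite -bin_ffact leq_pmulr ?fact_gt0.
by elim: k => // k IHk; rewrite ffactnSr expnSr leq_mul ?leq_subr.
Qed.

Lemma card_subsets_leq (T : finType) (E : {set T}) m :
  #|[set S : {set T} | S \subset E & #|S| <= m]| <= #|E|.+1 ^ m.
Proof.
elim: m => [|m IHm].
  rewrite expn0 -(cards1 (@set0 T)) subset_leq_card //.
  by apply/subsetP => S; rewrite !inE leqn0 cards_eq0 => /andP[_ ->].
have split_size : [set S : {set T} | S \subset E & #|S| <= m.+1] \subset
    [set S : {set T} | S \subset E & #|S| <= m] :|:
    [set S : {set T} | S \subset E & #|S| == m.+1].
  apply/subsetP => S; rewrite !inE leq_eqVlt ltnS.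
  by case/andP => -> /orP[]->; rewrite ?orbT.
apply: leq_trans (subset_leq_card split_size) _.
apply: leq_trans (leq_card_setU _ _) _.
rewrite cards_draws expnS mulSn leq_add //.
apply: leq_trans (bin_leq_expn _ _) _.
rewrite expnS leq_mul //.
by case: m {IHm split_size} => // m; rewrite leq_exp2r.
Qed.

Lemma card_nonempty_subsets_lt (T : finType) (E : {set T}) m :
  #|[set S : {set T} | S \subset E & 0 < #|S| <= m]| < #|E|.+1 ^ m.
Proof.
apply: leq_trans (card_subsets_leq E m).
have -> : [set S : {set T} | S \subset E & 0 < #|S| <= m] =
          [set S : {set T} | S \subset E & #|S| <= m] :\ set0.
  by apply/setP => S; rewrite !inE card_gt0 andbCA.
by rewrite [X in _ < X](cardsD1 set0) !inE sub0set cards0.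
Qed.

Section GroupAlgebra.
Local Open Scope ring_scope.
Variables (F : finFieldType) (gT : finGroupType).
Local Notation FG := (galg F gT).
Local Notation e0 := (ge0 F gT).
Implicit Types a b c e f x : FG.

Definition gmulr c a := gmul a c.

Fact gmulr_is_linear c : linear (gmulr c).
Proof.
move=> k a b; apply/ffunP => g; rewrite !ffunE scaler_sumr -big_split.
by apply: eq_bigr => h _; rewrite !ffunE /GRing.scale /= mulrDl mulrA.
Qed.

HB.instance Definition _ c :=
  GRing.isLinear.Build F FG FG *:%R (gmulr c) (gmulr_is_linear c).

Lemma gmulDl a b c : gmul (a + b) c = gmul a c + gmul b c.
Proof. exact: (linearD (gmulr c)). Qed.

Lemma gmulBl a b c : gmul (a - b) c = gmul a c - gmul b c.
Proof. exact: (linearB (gmulr c)). Qed.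

Lemma gmul0l c : gmul 0 c = 0.
Proof. exact: (linear0 (gmulr c)). Qed.

Lemma gmulZl k a c : gmul (k *: a) c = k *: gmul a c.
Proof. exact: (linearZZ (gmulr c)). Qed.

Lemma gmulA a b c : gmul a (gmul b c) = gmul (gmul a b) c.
Proof.
apply/ffunP => g; rewrite !ffunE.
under [RHS]eq_bigr do rewrite ffunE mulr_suml.
rewrite exchange_big /=; apply: eq_bigr => k _.
rewrite ffunE mulr_sumr [RHS](reindex_inj (mulgI k)) /=.
by apply: eq_bigr => h _; rewrite mulrA mulKg invMg mulgA.
Qed.

Lemma gmul_ge0l x : gmul e0 x = (\sum_h x h) *: e0.
Proof.
apply/ffunP => g; rewrite !ffunE /GRing.scale /= mulr_suml.
rewrite [LHS](reindex_inj (mulgI g)) [LHS](reindex_inj invg_inj) /=.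
apply: eq_bigr => h _; rewrite !ffunE mulrC; congr (_ * _).
by rewrite invMg invgK mulgKV.
Qed.

Lemma gidealP e v : reflect (exists x, v = gmul x e) (v \in gideal e).
Proof.
apply: (iffP idP) => [v_e | [x ->]]; last first.
  by apply: memv_span; apply: map_f; rewrite mem_enum memvf.
have sub_img : (gideal e <= linfun (gmulr e) @: fullv)%VS.
  apply/span_subvP => _ /mapP[x _ ->].
  by rewrite -[gmul x e]/(gmulr e x) -lfunE memv_img ?memvf.
have /memv_imgP[x _ ->] := subvP sub_img v v_e.
by exists x; rewrite lfunE.
Qed.

Lemma gideal_idem e : gmul e e = e -> e \in gideal e.
Proof. by move=> ee; apply/gidealP; exists e. Qed.

Lemma gideal_fix e v : gmul e e = e -> v \in gideal e -> gmul v e = v.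
Proof. by move=> ee /gidealP[x ->]; rewrite -gmulA ee. Qed.

Lemma dim_gideal_gt0 e : gmul e e = e -> e != 0 -> (0 < \dim (gideal e))%N.
Proof.
move=> ee; apply: contraNT; rewrite -eqn0Ngt dimv_eq0 => /eqP ideal0.
by have := gideal_idem ee; rewrite ideal0 memv0.
Qed.

Lemma gprim_idem e : gprim e -> gmul e e = e.
Proof. by case/andP => /andP[_ /eqP]. Qed.

Lemma gprim_neq0 e : gprim e -> e != 0.
Proof. by case/andP => /andP[]. Qed.

Lemma mu_q_le_dim e : gprim e -> e != e0 -> (mu_q F gT <= \dim (gideal e))%N.
Proof.
move=> prim_e nz_e; rewrite /mu_q -Order.NatOrder.minEnat.
by apply: (@Order.TotalTheory.bigmin_le_cond _ nat); rewrite prim_e.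
Qed.

Lemma mu_q_gt0 : (0 < mu_q F gT)%N.
Proof.
apply: (big_ind (fun m => 0 < m)%N) => [|m1 m2 m1_gt0 m2_gt0|e /andP[prim_e _]].
- by apply/card_gt0P; exists 1%g.
- by rewrite leq_min m1_gt0.
- exact: dim_gideal_gt0 (gprim_idem prim_e) (gprim_neq0 prim_e).
Qed.

Section Abelian.
Hypothesis abelG : abelian [set: gT].

Let commG (x y : gT) : (x * y = y * x)%g.
Proof. by move/centsP: abelG => /(_ x (in_setT x) y (in_setT y)). Qed.

Lemma gmulC a b : gmul a b = gmul b a.
Proof.
apply/ffunP => g; rewrite !ffunE [RHS](reindex_inj (mulgI g)).
rewrite [RHS](reindex_inj invg_inj) /=.
by apply: eq_bigr => h _; rewrite mulrC invMg invgK mulgKV commG.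
Qed.

Lemma gmulDr a b c : gmul c (a + b) = gmul c a + gmul c b.
Proof. by rewrite !(gmulC c) gmulDl. Qed.

Lemma gmulBr a b c : gmul c (a - b) = gmul c a - gmul c b.
Proof. by rewrite !(gmulC c) gmulBl. Qed.

Lemma gmul0r c : gmul c 0 = 0.
Proof. by rewrite gmulC gmul0l. Qed.

Lemma gprim_split e f1 f2 : gprim e -> gmul f1 f1 = f1 -> gmul f2 f2 = f2 ->
  gmul f1 f2 = 0 -> e = f1 + f2 -> f1 = 0 \/ f2 = 0.
Proof.
case/andP => _ /forallP/(_ f1)/forallP/(_ f2)/negP split_e f1f1 f2f2 f1f2 def_e.
have [->|nz_f1] := eqVneq f1 0; first by left.
have [->|nz_f2] := eqVneq f2 0; first by right.
case: split_e; rewrite /gidem nz_f1 nz_f2 f1f1 f2f2 f1f2.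
by rewrite gmulC f1f2 def_e !eqxx.
Qed.

(* Splitting e as e f + (e - e f) shows that e f is 0 or e. *)
Lemma gprim_mul_idem e f : gprim e -> gmul f f = f ->
  gmul e f = 0 \/ gmul e f = e.
Proof.
move=> prim_e ff; have ee := gprim_idem prim_e.
have efe : gmul e (gmul e f) = gmul e f by rewrite gmulA ee.
have efef : gmul (gmul e f) (gmul e f) = gmul e f.
  by rewrite gmulA [gmul _ e]gmulC gmulA ee -gmulA ff.
have rest_idem : gmul (e - gmul e f) (e - gmul e f) = e - gmul e f.
  by rewrite gmulBl !gmulBr ee efe [gmul _ e]gmulC efe efef subrr subr0.
have orth : gmul (gmul e f) (e - gmul e f) = 0.
  by rewrite gmulBr [gmul _ e]gmulC efe efef subrr.
have def_e : e = gmul e f + (e - gmul e f) by rewrite addrC subrK.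
have [|rest0] := gprim_split prim_e efef rest_idem orth def_e; first by left.
by right; apply/eqP; rewrite eq_sym -subr_eq0 rest0.
Qed.

Lemma gprim_orth e f : gprim e -> gprim f -> e != f -> gmul e f = 0.
Proof.
move=> prim_e prim_f; have [//|ef] := gprim_mul_idem prim_e (gprim_idem prim_f).
have [fe|fe] := gprim_mul_idem prim_f (gprim_idem prim_e).
  by rewrite gmulC fe.
by rewrite -ef -[X in _ != X]fe gmulC eqxx.
Qed.

Lemma gideal_sub e x : gmul x e = e -> (gideal e <= gideal x)%VS.
Proof.
move=> xe; apply/subvP => _ /gidealP[y ->]; apply/gidealP.
by exists (gmul y e); rewrite -gmulA [gmul e x]gmulC xe.
Qed.

Section OrthogonalIdempotents.
Variable S : {set FG}.
Hypothesis idemS : forall x, x \in S -> gmul x x = x.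
Hypothesis orthS : {in S &, forall x y, x != y -> gmul x y = 0}.

(* Multiplying a relation sum_y u_y = 0 (u_y in FG y) by x isolates u_x. *)
Lemma directv_Jsum : directv (\sum_(x in S) gideal x).
Proof.
apply/directv_sum_independent => u u_in sum0 x xS.
have fix_u y : y \in S -> gmul (u y) y = u y.
  by move=> yS; apply: gideal_fix (idemS yS) (u_in y yS).
have := congr1 (gmulr x) sum0; rewrite linear_sum linear0 (bigD1 x xS) /=.
rewrite big1 ?addr0; first by rewrite /gmulr fix_u.
move=> y /andP[yS nyx].
by rewrite /gmulr -(fix_u y yS) -gmulA (orthS yS xS nyx) gmul0r.
Qed.

Lemma dim_Jsum : \dim (Jsum S) = (\sum_(x in S) \dim (gideal x))%N.
Proof. exact/directvP/directv_Jsum. Qed.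

End OrthogonalIdempotents.

Section PrincipalIdempotent.
Hypothesis n_neq0 : (#|gT|%:R : F) != 0.

Lemma ge0_neq0 : e0 != 0.
Proof.
by apply/eqP => /ffunP/(_ 1%g)/eqP; rewrite !ffunE invr_eq0 (negPf n_neq0).
Qed.

Lemma ge0_idem : gmul e0 e0 = e0.
Proof.
rewrite gmul_ge0l; under eq_bigr do rewrite ffunE.
by rewrite sumr_const -[_ *+ _]mulr_natr mulVf // scale1r.
Qed.

(* An idempotent f absorbed by e0 is a scalar multiple of e0, so two nonzero
   such idempotents cannot be orthogonal. *)
Lemma gprim_ge0 : gprim e0.
Proof.
apply/andP; split; first by rewrite /gidem ge0_neq0 ge0_idem eqxx.
apply/forallP => f1; apply/forallP => f2; apply/negP.
case/and5P => /andP[nz_f1 /eqP f1f1] /andP[nz_f2 /eqP f2f2] /eqP f1f2 /eqP f2f1.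
move=> /eqP def_e0.
have e0f1 : gmul e0 f1 = f1 by rewrite def_e0 gmulDl f1f1 f2f1 addr0.
have e0f2 : gmul e0 f2 = f2 by rewrite def_e0 gmulDl f2f2 f1f2 add0r.
move/eqP: f1f2; rewrite -e0f1 gmul_ge0l gmulZl e0f2 scaler_eq0 (negPf nz_f2).
rewrite orbF => /eqP sum0.
by move: nz_f1; rewrite -e0f1 gmul_ge0l sum0 scale0r eqxx.
Qed.

Lemma gmul_ge0_gprim e : gprim e -> e != e0 -> gmul e0 e = 0.
Proof. by move=> prim_e nz_e; rewrite gprim_orth ?gprim_ge0 // eq_sym. Qed.

End PrincipalIdempotent.

Section Frobenius.
Variable q : nat.
Hypothesis frobD : forall x y : F, (x + y) ^+ q = x ^+ q + y ^+ q.
Hypothesis frobK : forall x : F, x ^+ q ^+ q = x.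
Local Notation tau := (@gtau F gT q).
Local Notation E := (@Ehat F gT q).

Lemma frob0 : (0 : F) ^+ q = 0.
Proof. by apply: (@addrI _ (0 ^+ q)); rewrite -frobD !addr0. Qed.

Lemma frob_sum (I : Type) (r : seq I) (P : pred I) (G : I -> F) :
  (\sum_(i <- r | P i) G i) ^+ q = \sum_(i <- r | P i) G i ^+ q.
Proof. exact: (big_morph (fun x : F => x ^+ q) frobD frob0). Qed.

Lemma frob_natr m : (m%:R : F) ^+ q = m%:R.
Proof. by elim: m => [|m IHm]; rewrite ?frob0 // mulrS frobD IHm expr1n. Qed.

Lemma tauD a b : tau (a + b) = tau a + tau b.
Proof. by apply/ffunP => g; rewrite !ffunE frobD. Qed.

Lemma tau0 : tau 0 = 0.
Proof. by apply/ffunP => g; rewrite !ffunE frob0. Qed.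

Lemma tauK : involutive tau.
Proof. by move=> a; apply/ffunP => g; rewrite !ffunE invgK frobK. Qed.

Lemma tau_inj : injective tau.
Proof. exact: inv_inj tauK. Qed.

Lemma tau_ge0 : tau e0 = e0.
Proof. by apply/ffunP => g; rewrite !ffunE exprVn frob_natr. Qed.

Lemma tauM a b : tau (gmul a b) = gmul (tau a) (tau b).
Proof.
apply/ffunP => g; rewrite !ffunE frob_sum [RHS](reindex_inj invg_inj) /=.
by apply: eq_bigr => h _; rewrite !ffunE exprMn invgK invMg commG.
Qed.

Lemma gprim_tau e : gprim e -> gprim (tau e).
Proof.
move=> prim_e; apply/andP; split.
  rewrite /gidem -tauM gprim_idem // eqxx andbT.
  by rewrite -tau0 (inj_eq tau_inj) gprim_neq0.
apply/forallP => f1; apply/forallP => f2; apply/negP.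
case/and5P => /andP[nz_f1 /eqP f1f1] /andP[nz_f2 /eqP f2f2] /eqP f1f2 _.
move=> /eqP def_e.
have idem_tau f : gmul f f = f -> gmul (tau f) (tau f) = tau f.
  by rewrite -tauM => ->.
have orth : gmul (tau f1) (tau f2) = 0 by rewrite -tauM f1f2 tau0.
have def_e' : e = tau f1 + tau f2 by rewrite -tauD -def_e tauK.
have := gprim_split prim_e (idem_tau _ f1f1) (idem_tau _ f2f2) orth def_e'.
by rewrite -tau0 => -[]/tau_inj/eqP; apply/negP.
Qed.

Lemma EhatP x : x \in E ->
  [/\ gprim x, x != e0 & tau x = x] \/
  exists e, [/\ gprim e, e != tau e & x = e + tau e].
Proof.
case/setUP => [|/imsetP[e]]; first by rewrite inE => /and3P[? ? /eqP]; left.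
by rewrite inE eq_sym => /andP[prim_e e_te] ->; right; exists e.
Qed.

Lemma Ehat_idem x : x \in E -> gmul x x = x.
Proof.
case/EhatP => [[prim_x _ _]|[e [prim_e e_te ->]]]; first exact: gprim_idem.
have orth : gmul e (tau e) = 0 by rewrite gprim_orth ?gprim_tau.
rewrite gmulDl !gmulDr orth gmulC orth !gprim_idem ?gprim_tau //.
by rewrite addr0 add0r.
Qed.

Lemma Ehat_absorbs_gprim x : x \in E ->
  exists2 e, gprim e && (e != e0) & gmul x e = e.
Proof.
case/EhatP => [[prim_x nz_x _]|[e [prim_e e_te ->]]].
  by exists x; rewrite ?prim_x ?gprim_idem.
exists e; last first.
  rewrite gmulDl gprim_idem // [gmul (tau e) e]gmulC.
  by rewrite gprim_orth ?gprim_tau ?addr0.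
by rewrite prim_e; apply: contraNneq e_te => ->; rewrite tau_ge0.
Qed.

Lemma Ehat_orth : {in E &, forall x y, x != y -> gmul x y = 0}.
Proof.
have fix_orth x f : gprim x -> tau x = x -> gprim f -> f != tau f ->
    gmul x (f + tau f) = 0.
  move=> prim_x tau_x prim_f f_tf.
  have x_f : x != f by apply: contraNneq f_tf => <-; rewrite tau_x.
  have x_tf : x != tau f by rewrite -(inj_eq tau_inj) tauK tau_x.
  by rewrite gmulDr !gprim_orth ?gprim_tau ?addr0.
move=> x y /EhatP[[px _ tx]|[e [pe e_te ->]]];
  move=> /EhatP[[py _ ty]|[f [pf f_tf ->]]] xy.
- exact: gprim_orth.
- exact: fix_orth.
- by rewrite gmulC fix_orth.
have e_f : e != f by apply: contra xy => /eqP->.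
have e_tf : e != tau f by apply: contra xy => /eqP->; rewrite tauK addrC.
have te_f : tau e != f by apply: contra xy => /eqP<-; rewrite tauK addrC.
have te_tf : tau e != tau f by rewrite (inj_eq tau_inj).
by rewrite gmulDl !gmulDr !gprim_orth ?gprim_tau // !addr0.
Qed.

Lemma mu_q_le_dim_Ehat x : x \in E -> (mu_q F gT <= \dim (gideal x))%N.
Proof.
case/Ehat_absorbs_gprim => e /andP[prim_e nz_e] xe.
exact: leq_trans (mu_q_le_dim prim_e nz_e) (dimvS (gideal_sub xe)).
Qed.

Lemma card_mul_mu_q_le_dim (S : {set FG}) :
  S \subset E -> (#|S| * mu_q F gT <= \dim (Jsum S))%N.
Proof.
move=> /subsetP sSE; rewrite dim_Jsum => [||].
- by rewrite -sum_nat_const leq_sum // => x /sSE/mu_q_le_dim_Ehat.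
- by move=> x /sSE/Ehat_idem.
- by move=> x y /sSE xE /sSE; apply: Ehat_orth.
Qed.

Section CoprimeOrder.
Hypothesis n_neq0 : (#|gT|%:R : F) != 0.

Lemma Ehat_orth_ge0 x : x \in E -> gmul e0 x = 0.
Proof.
case/EhatP => [[prim_x nz_x _]|[e [prim_e e_te ->]]].
  exact: gmul_ge0_gprim.
have e_ne0 : e != e0 by apply: contraNneq e_te => ->; rewrite tau_ge0.
have te_ne0 : tau e != e0 by rewrite -tau_ge0 (inj_eq tau_inj).
by rewrite gmulDr !gmul_ge0_gprim ?gprim_tau ?addr0.
Qed.

Lemma ge0_notin_Ehat : e0 \notin E.
Proof.
by apply/negP => /Ehat_orth_ge0; rewrite ge0_idem //; apply/eqP/ge0_neq0.
Qed.

(* The FGx, x in e0 |: E, are nonzero and form a direct sum inside FG. *)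
Lemma card_Ehat_lt : (#|E| < #|gT|)%N.
Proof.
set S := e0 |: E.
have idemS x : x \in S -> gmul x x = x.
  by case/setU1P => [->|/Ehat_idem//]; apply: ge0_idem.
have orthS : {in S &, forall x y, x != y -> gmul x y = 0}.
  move=> x y /setU1P[->|xE] /setU1P[->|yE]; rewrite ?eqxx // => xy.
  - exact: Ehat_orth_ge0.
  - by rewrite gmulC Ehat_orth_ge0.
  - exact: Ehat_orth.
have dim_gt0 x : x \in S -> (0 < \dim (gideal x))%N.
  case/setU1P => [->|xE]; first exact: dim_gideal_gt0 (ge0_idem _) (ge0_neq0 _).
  exact: leq_trans mu_q_gt0 (mu_q_le_dim_Ehat xE).
have : (#|S| <= \dim (Jsum S))%N by rewrite dim_Jsum // -sum1_card leq_sum.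
rewrite cardsU1 ge0_notin_Ehat add1n => /leq_trans; apply.
by apply: leq_trans (dimvS (subvf _)) _; rewrite dimvf /dim /= muln1.
Qed.

Lemma card_Omega_lt l : (mu_q F gT <= l)%N ->
  (#|@Omega F gT q l| < #|gT| ^ (l %/ mu_q F gT))%N.
Proof.
move=> mu_l; set m := (l %/ mu_q F gT)%N.
have small : [set S : {set FG} | (S \subset E) && (\dim (Jsum S) == l)] \subset
             [set S : {set FG} | S \subset E & (0 < #|S| <= m)%N].
  apply/subsetP => S; rewrite !inE => /andP[sSE /eqP dimS].
  rewrite sSE leq_divRL ?mu_q_gt0 // -dimS card_mul_mu_q_le_dim // andbT /=.
  rewrite card_gt0; apply: contraTneq mu_l => S0.
  by rewrite -ltnNge -dimS S0 /Jsum big_set0 dimv0 mu_q_gt0.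
apply: leq_ltn_trans (leq_imset_card _ _) _.
apply: leq_ltn_trans (subset_leq_card small) _.
apply: leq_trans (card_nonempty_subsets_lt E m) _.
by rewrite leq_exp2r ?divn_gt0 ?mu_q_gt0 // card_Ehat_lt.
Qed.

End CoprimeOrder.
End Frobenius.

End Abelian.
End GroupAlgebra.

Section FrobeniusOfSquareOrder.
Variables (F : finFieldType) (p k : nat).
Hypotheses (p_pr : prime p) (cardF : #|F| = (p ^ k) ^ 2).

Lemma pchar_card_sqr : p \in [pchar F]%R.
Proof. by apply: (@card_finPcharP _ _ (k * 2)); rewrite // cardF -expnM. Qed.

Lemma frobD_card_sqr (x y : F) :
  ((x + y) ^+ (p ^ k) = x ^+ (p ^ k) + y ^+ (p ^ k))%R.
Proof. by rewrite exprDn_pchar // pnatX pnatE // pchar_card_sqr. Qed.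

Lemma frobK_card_sqr (x : F) : (x ^+ (p ^ k) ^+ (p ^ k))%R = x.
Proof. by rewrite -exprM mulnn -cardF expf_card. Qed.

Lemma natr_coprime_card_neq0 n :
  0 < k -> coprime n (p ^ k) -> (n%:R : F)%R != 0%R.
Proof.
move=> k_gt0; rewrite coprime_pexpr // coprime_sym prime_coprime //.
by rewrite (dvdn_pcharf pchar_card_sqr).
Qed.

End FrobeniusOfSquareOrder.

Theorem lemma3p12 (q : nat) (F : finFieldType) (gT : finGroupType) (l : nat) :
  (exists p k, [/\ prime p, 0 < k & q = p ^ k]) ->
  #|F| = q ^ 2 ->
  abelian [set: gT] ->
  odd #|gT| ->
  coprime #|gT| q ->
  1 < #|gT| ->
  @mu_q F gT <= l < #|gT| ->
  #|@Omega F gT q l| ^ @mu_q F gT < #|gT| ^ l.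
Proof.
move=> [p [k [p_pr k_gt0 ->]]] cardF abelG _ coprime_n_q n_gt1 /andP[mu_l _].
have := card_Omega_lt abelG (frobD_card_sqr p_pr cardF) (frobK_card_sqr cardF)
  (natr_coprime_card_neq0 p_pr cardF k_gt0 coprime_n_q) mu_l.
rewrite -(ltn_exp2r _ _ (mu_q_gt0 F gT)) -expnM => /leq_trans; apply.
by rewrite leq_pexp2l ?leq_divM // ltnW.
Qed.
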